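(* Let $k,m \in \mathbb{N}$, and let $G$ be an ordered graph with irreducible block decomposition $(G_1, \ldots, G_m)$. If $|\{i \in [m] : G_i \notin \mathcal{J}\}| \geqslant k$, then $S_n(G) \geqslant 2^{n-1}$ for every $n \leqslant k$.
   Context: Ordered graphs of order $n$ have vertex set $[n]$ with the natural order. A pair of vertices $u<v$ separates the edges of $G$ if every edge $ij$ ($i<j$) has $j\leqslant u$ or $v\leqslant i$; $G$ is irreducible if no pair separates its edges. $G_1+\dots+G_m$ places copies of $G_1,\dots,G_m$ consecutively from left to right with no edges between copies; every ordered graph is uniquely $G_1+\dots+G_m$ with all $G_i$ irreducible, and $(G_1,\dots,G_m)$ is its irreducible block decomposition. $S_n(G)$ is the number of distinct (non-isomorphic as ordered graphs) induced ordered subgraphs of $G$ of order $n$. For $n\in\mathbb{N}$: $J^{(n)}_1=K_n$; $J^{(n)}_2$ on $[n]$ with edge set $\{1n\}$ if $n\geqslant 2$ (empty if $n=1$); $J^{(n)}_3$ on $[n]$ with edges $\{1i: 2\leqslant i\leqslant n\}$; $J^{(n)}_4$ on $[n]$ with edges $\{in: 1\leqslant i\leqslant n-1\}$; $L^{(n)}$ on $[n]$ with edges $\{i(i+1)\}$; $Q_1$ on $[4]$ with edges $\{13,24\}$; $Q_2$ on $[4]$ with edges $\{14,23\}$. $\mathcal{J}$ is the set of all $J^{(n)}_i$, $L^{(n)}$ ($n\in\mathbb{N}$, $i\in[4]$), $Q_1$, $Q_2$. *)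

From mathcomp Require Import all_boot.
Set Implicit Arguments. Unset Strict Implicit. Unset Printing Implicit Defensive.

(* An ordered graph of order [ord] has vertex set {0, ..., ord-1} (0-indexed
   version of [ord] = {1,...,ord}) with the natural order.  Its edge set is
   { ij : i < j < ord, adj i j }; values of [adj] outside i < j < ord are
   irrelevant. *)
Record ograph := OGraph { ord : nat; adj : nat -> nat -> bool }.

Definition is_edge (G : ograph) (i j : nat) : bool :=
  [&& i < j, j < ord G & adj G i j].

Definition oiso (G H : ograph) : bool :=
  (ord G == ord H) &&
  [forall i : 'I_(ord G), forall j : 'I_(ord G),
     (i < j) ==> (adj G i j == adj H i j)].

Definition separates (G : ograph) (u v : nat) : bool :=
  [forall i : 'I_(ord G), forall j : 'I_(ord G),
     is_edge G i j ==> ((j <= u) || (v <= i))].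

Definition irreducible (G : ograph) : bool :=
  ~~ [exists u : 'I_(ord G), exists v : 'I_(ord G),
        (u < v) && separates G u v].

Definition osum2 (G H : ograph) : ograph :=
  OGraph (ord G + ord H)
    (fun i j => if j < ord G then adj G i j
                else if ord G <= i then adj H (i - ord G) (j - ord G)
                else false).

Definition oempty : ograph := OGraph 0 (fun _ _ => false).

Definition osum (bs : seq ograph) : ograph := foldr osum2 oempty bs.

Definition block_decomposition (G : ograph) (bs : seq ograph) : bool :=
  all irreducible bs && oiso G (osum bs).

Definition J1 (n : nat) : ograph := OGraph n (fun i j => true).
Definition J2 (n : nat) : ograph := OGraph n (fun i j => (i == 0) && (j == n.-1)).
Definition J3 (n : nat) : ograph := OGraph n (fun i j => i == 0).
Definition J4 (n : nat) : ograph := OGraph n (fun i j => j == n.-1).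
Definition Lpath (n : nat) : ograph := OGraph n (fun i j => j == i.+1).
Definition Q1 : ograph :=
  OGraph 4 (fun i j => ((i == 0) && (j == 2)) || ((i == 1) && (j == 3))).
Definition Q2 : ograph :=
  OGraph 4 (fun i j => ((i == 0) && (j == 3)) || ((i == 1) && (j == 2))).

(* G is (isomorphic to) a member of J.  Isomorphism forces equal orders, so
   n ranging over 0..ord G covers every member that could match. *)
Definition inJ (G : ograph) : bool :=
  [exists n : 'I_(ord G).+1,
     [|| oiso G (J1 n), oiso G (J2 n), oiso G (J3 n), oiso G (J4 n)
       | oiso G (Lpath n)]]
  || oiso G Q1 || oiso G Q2.

Definition sorted_verts (N : nat) (S : {set 'I_N}) : seq nat :=
  [seq val x | x <- enum S].

(* The induced ordered subgraph on S, relabelled to {0,...,n-1} preserving the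
   order, encoded by its (upper-triangular) edge indicator.  Two induced
   subgraphs of order n are isomorphic as ordered graphs iff these codes
   coincide. *)
Definition induced_code (G : ograph) (n : nat) (S : {set 'I_(ord G)})
  : {ffun 'I_n -> {ffun 'I_n -> bool}} :=
  [ffun i : 'I_n => [ffun j : 'I_n =>
     (i < j) && adj G (nth 0 (sorted_verts S) i) (nth 0 (sorted_verts S) j)]].

Definition Sn (n : nat) (G : ograph) : nat :=
  #|[set induced_code n S | S in [set S : {set 'I_(ord G)} | #|S| == n]]|.

(* Write G = B + R with B its first irreducible block.  An induced subgraph of
   G of order n whose first irreducible block (of order j) is taken from B and
   whose remaining n - j vertices are taken from R determines both pieces,
   because j is recovered as the first cut of the subgraph crossed by no edge.
   Hence S_n(B + R) >= sum_j I_j(B) S_(n-j)(R), where I_j(B) counts the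
   irreducible induced subgraphs of B of order j.  If B is irreducible and not
   in J, then I_1, I_2 >= 1 and either I_3 >= 2, or I_3 >= 1 and I_4 >= 2:
   when all irreducible triples of B induce the same pattern, that pattern
   forces B to be complete, J_3, L, J_4, or an ordered matching, and an
   irreducible matching outside J has two different irreducible 4-vertex
   induced subgraphs.  Either alternative makes the sum at least 2^(n-1) once
   S_m(R) >= 2^(m-1) for m < n, so induction over the blocks concludes. *)

From mathcomp Require Import all_boot zify.
From Stdlib Require Import Classical.
Set Implicit Arguments. Unset Strict Implicit. Unset Printing Implicit Defensive.

Definition code n := {ffun 'I_n -> {ffun 'I_n -> bool}}.

Definition mkcode n (f : rel nat) : code n :=
  [ffun i : 'I_n => [ffun k : 'I_n => f i k]].

(* [code_rel c] reads a code at natural-number indices, as [false] out of range;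
   this is what allows comparing codes of different orders. *)
Definition code_rel n (c : code n) : rel nat := fun i k =>
  if (@insub _ _ 'I_n i, @insub _ _ 'I_n k) is (Some i', Some k') then c i' k' else false.

Definition induced_rel (G : ograph) (s : seq nat) : rel nat := fun i k =>
  (i < k) && adj G (nth 0 s i) (nth 0 s k).

Definition codes n (G : ograph) : {set code n} :=
  [set induced_code n S | S in [set S : {set 'I_(ord G)} | #|S| == n]].

Lemma SnE n G : Sn n G = #|codes n G|.
Proof. by []. Qed.

Lemma eq_mkcode n (f g : rel nat) :
  (forall i k, i < n -> k < n -> f i k = g i k) -> mkcode n f = mkcode n g.
Proof. by move=> fg; apply/ffunP => i; apply/ffunP => k; rewrite !ffunE fg. Qed.

Lemma code_rel_ord n (c : code n) (i k : 'I_n) : code_rel c i k = c i k.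
Proof. by rewrite /code_rel !valK. Qed.

Lemma code_rel_mkcode n f i k : i < n -> k < n -> code_rel (mkcode n f) i k = f i k.
Proof. by move=> ilt klt; rewrite /code_rel !insubT !ffunE. Qed.

Lemma code_relK n (c : code n) : mkcode n (code_rel c) = c.
Proof. by apply/ffunP => i; apply/ffunP => k; rewrite !ffunE code_rel_ord. Qed.

Lemma code_rel_inj n (c d : code n) :
  (forall i k, i < n -> k < n -> code_rel c i k = code_rel d i k) -> c = d.
Proof. by move=> cd; rewrite -(code_relK c) -(code_relK d); apply: eq_mkcode. Qed.

Lemma mkcode_neq n (f g : rel nat) i k :
  i < n -> k < n -> f i k != g i k -> mkcode n f != mkcode n g.
Proof.
move=> ilt klt; apply: contra_neq => /(congr1 (@code_rel n)) fg.
by rewrite -(code_rel_mkcode f ilt klt) fg code_rel_mkcode.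
Qed.

Section SortedVertices.
Variable N : nat.
Implicit Type S : {set 'I_N}.

Lemma sorted_verts_ltn S : sorted ltn (sorted_verts S).
Proof.
apply: (@subseq_sorted _ _ ltn_trans _ (iota 0 N)); last exact: iota_ltn_sorted.
rewrite -val_enum_ord; apply: map_subseq.
by rewrite enumT /enum_mem; apply: filter_subseq.
Qed.

Lemma size_sorted_verts S : size (sorted_verts S) = #|S|.
Proof. by rewrite size_map cardE. Qed.

Lemma sorted_verts_bounded S : all (gtn N) (sorted_verts S).
Proof. by apply/allP => _ /mapP [x _ ->]; apply: ltn_ord. Qed.

Lemma mem_sorted_verts S (x : 'I_N) : (val x \in sorted_verts S) = (x \in S).
Proof. by rewrite mem_map ?mem_enum //; apply: val_inj. Qed.

Definition set_of_seq (s : seq nat) : {set 'I_N} := [set x : 'I_N | val x \in s].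

Lemma set_of_seqK s : sorted ltn s -> all (gtn N) s -> sorted_verts (set_of_seq s) = s.
Proof.
move=> s_sorted s_bounded.
apply: (irr_sorted_eq ltn_trans ltnn (sorted_verts_ltn _) s_sorted) => x.
apply/idP/idP => [xS | xs].
  have xN : x < N := allP (sorted_verts_bounded _) x xS.
  by move: xS; rewrite -[x]/(val (Ordinal xN)) mem_sorted_verts inE.
have xN : x < N := allP s_bounded x xs.
by rewrite -[x]/(val (Ordinal xN)) mem_sorted_verts inE.
Qed.

End SortedVertices.

Lemma mem_codes n G s : sorted ltn s -> all (gtn (ord G)) s -> size s = n ->
  mkcode n (induced_rel G s) \in codes n G.
Proof.
move=> s_sorted s_bounded <-; apply/imsetP; exists (set_of_seq (ord G) s).
  by rewrite inE -size_sorted_verts set_of_seqK.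
by rewrite /induced_code set_of_seqK.
Qed.

Lemma codesP n G (c : code n) : c \in codes n G -> exists s,
  [/\ sorted ltn s, all (gtn (ord G)) s, size s = n & c = mkcode n (induced_rel G s)].
Proof.
case/imsetP => S; rewrite inE => /eqP cardS ->; exists (sorted_verts S).
by split; rewrite ?size_sorted_verts ?sorted_verts_ltn ?sorted_verts_bounded.
Qed.

Lemma code_rel_codes_upper n G (c : code n) i k :
  c \in codes n G -> k <= i -> code_rel c i k = false.
Proof.
case/codesP => s [_ _ _ ->] ki.
case: (ltnP i n) => [ilt|ige]; last by rewrite /code_rel insubF // ltnNge ige.
by rewrite code_rel_mkcode ?(leq_ltn_trans ki) // /induced_rel ltnNge ki.
Qed.

Lemma codes0_gt0 G : 0 < #|codes 0 G|.
Proof. by apply/card_gt0P; exists (mkcode 0 (induced_rel G [::])); apply: mem_codes. Qed.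

Definition rel_sum j (f g : rel nat) : rel nat := fun i k =>
  if k < j then f i k else if j <= i then g (i - j) (k - j) else false.

Definition crossing n (f : rel nat) :=
  forall u, 0 < u -> u < n -> exists i k, [/\ i < u, u <= k, k < n & f i k].

Definition irreducible_code n (c : code n) : bool :=
  [forall u : 'I_n, (0 < u) ==>
     [exists i : 'I_n, exists k : 'I_n, [&& i < u, u <= k & c i k]]].

Lemma irreducible_mkcode n f : crossing n f -> irreducible_code (mkcode n f).
Proof.
move=> f_cross; apply/forallP => u; apply/implyP => u_gt0.
have [i [k [iu uk klt fik]]] := f_cross u u_gt0 (ltn_ord u).
apply/existsP; exists (Ordinal (ltn_trans iu (ltn_ord u))).
by apply/existsP; exists (Ordinal klt); rewrite /= iu uk !ffunE.
Qed.

Lemma irreducible_code_crossing n (c : code n) :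
  irreducible_code c -> crossing n (code_rel c).
Proof.
move=> /forallP c_irr u u_gt0 ult.
have /existsP [i /existsP [k /and3P [iu uk cik]]] := implyP (c_irr (Ordinal ult)) u_gt0.
by exists i, k; rewrite code_rel_ord.
Qed.

Lemma crossing_rel_sum_inj n j j' f g f' g' :
  0 < j <= n -> 0 < j' <= n -> crossing j f -> crossing j' f' ->
  (forall i k, i < k -> k < n -> rel_sum j f g i k = rel_sum j' f' g' i k) ->
  j = j'.
Proof.
have cut_lt j1 j2 f1 f2 g1 g2 : 0 < j1 -> j1 < j2 -> j2 <= n -> crossing j2 f2 ->
    (forall i k, i < k -> k < n -> rel_sum j1 f1 g1 i k = rel_sum j2 f2 g2 i k) ->
    False.
  move=> j1_gt0 j12 j2n f2_cross fg.
  have [i [k [ij1 j1k kj2 f2ik]]] := f2_cross j1 j1_gt0 j12.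
  move: (fg i k (leq_trans ij1 j1k) (leq_trans kj2 j2n)).
  by rewrite /rel_sum kj2 f2ik ltnNge j1k /= leqNgt ij1.
move=> /andP [j_gt0 jn] /andP [j'_gt0 j'n] f_cross f'_cross fg.
case: (ltngtP j j') => // [jj'|j'j]; exfalso; first exact: (cut_lt j j' f f' g g').
by apply: (cut_lt j' j f' f g' g) => // i k ik kn; rewrite fg.
Qed.

Lemma induced_rel_osum2 A B s t i k :
  all (gtn (ord A)) s -> i < k -> k < size s + size t ->
  induced_rel (osum2 A B) (s ++ map (addn (ord A)) t) i k =
  rel_sum (size s) (induced_rel A s) (induced_rel B t) i k.
Proof.
move=> s_bounded ik klt; rewrite /induced_rel /rel_sum ik /= !nth_cat.
have s_lt m : m < size s -> nth 0 s m < ord A.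
  by move=> ms; apply: (allP s_bounded); apply: mem_nth.
case: (ltnP k (size s)) => [ks|sk]; first by rewrite (ltn_trans ik ks) /= s_lt.
rewrite (nth_map 0) /=; last by lia.
rewrite ltnNge leq_addr /=.
case: (ltnP i (size s)) => [i_lt|i_ge]; first by rewrite leqNgt s_lt.
by rewrite (nth_map 0) /= ?leq_addr ?addKn ?ltn_sub2rE //; lia.
Qed.

Lemma sorted_cat_shift N s t : sorted ltn s -> sorted ltn t -> all (gtn N) s ->
  sorted ltn (s ++ map (addn N) t).
Proof.
rewrite !(sorted_pairwise ltn_trans) pairwise_cat pairwise_map => -> t_sorted s_bounded.
rewrite (sub_pairwise _ t_sorted) ?andbT => [|x y /=]; last by rewrite ltn_add2l.
apply/allrelP => x _ xs /mapP [y _ ->]; exact: leq_trans (allP s_bounded x xs) (leq_addr _ _).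
Qed.

Definition concat_code n j (x : code j) (y : code (n - j)) : code n :=
  mkcode n (fun i k => (i < k) && rel_sum j (code_rel x) (code_rel y) i k).
Arguments concat_code : clear implicits.

Definition irr_codes j A : {set code j} := [set c in codes j A | irreducible_code c].

Definition concat_codes n j A B : {set code n} :=
  [set concat_code n j xy.1 xy.2 | xy in setX (irr_codes j A) (codes (n - j) B)].

Lemma concat_code_induced n j A B s t : j <= n -> all (gtn (ord A)) s ->
  size s = j -> size t = n - j ->
  concat_code n j (mkcode j (induced_rel A s)) (mkcode (n - j) (induced_rel B t)) =
  mkcode n (induced_rel (osum2 A B) (s ++ map (addn (ord A)) t)).
Proof.
move=> jn s_bounded s_size t_size; apply: eq_mkcode => i k ilt klt.
case: (ltnP i k) => [ik|ki] /=; last by rewrite /induced_rel ltnNge ki.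
rewrite induced_rel_osum2 ?s_size ?t_size ?subnKC // /rel_sum.
case: ifP => [kj|kj]; first by rewrite code_rel_mkcode ?(ltn_trans ik).
by case: ifP => // ji; rewrite code_rel_mkcode //; lia.
Qed.

Lemma concat_codes_sub n j A B : j <= n -> concat_codes n j A B \subset codes n (osum2 A B).
Proof.
move=> jn; apply/subsetP => _ /imsetP [[x y] /setXP [+ y_codes] ->].
case/codesP: y_codes => t [t_sorted t_bounded t_size ->].
rewrite inE => /andP [/codesP [s [s_sorted s_bounded s_size ->]] _] /=.
rewrite concat_code_induced //; apply: mem_codes.
- exact: sorted_cat_shift.
- rewrite all_cat all_map; apply/andP; split.
    by apply: sub_all s_bounded => z /= zA; apply: ltn_addr.
  by apply: sub_all t_bounded => z /=; rewrite ltn_add2l.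
- by rewrite size_cat size_map s_size t_size subnKC.
Qed.

Lemma concat_code_inj n j j' (x : code j) (y : code (n - j)) (x' : code j')
    (y' : code (n - j')) :
  0 < j <= n -> 0 < j' <= n -> irreducible_code x -> irreducible_code x' ->
  concat_code n j x y = concat_code n j' x' y' ->
  j = j' /\ forall i k, i < k -> k < n ->
    rel_sum j (code_rel x) (code_rel y) i k = rel_sum j (code_rel x') (code_rel y') i k.
Proof.
move=> j_range j'_range x_irr x'_irr /(congr1 (@code_rel n)) xy.
have sums_eq i k : i < k -> k < n ->
    rel_sum j (code_rel x) (code_rel y) i k = rel_sum j' (code_rel x') (code_rel y') i k.
  move=> ik kn; move: (congr1 (fun r : rel nat => r i k) xy) => /=.
  by rewrite !code_rel_mkcode ?ik // (ltn_trans ik).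
have jj' := crossing_rel_sum_inj j_range j'_range
  (irreducible_code_crossing x_irr) (irreducible_code_crossing x'_irr) sums_eq.
by subst j'.
Qed.

Lemma card_concat_codes n j A B : 0 < j <= n ->
  #|concat_codes n j A B| = #|irr_codes j A| * #|codes (n - j) B|.
Proof.
move=> j_range; rewrite card_in_imset ?cardsX //.
move=> [x y] [x' y'] /setXP [+ y_codes] /setXP [+ y'_codes] /=.
rewrite !inE => /andP [x_codes x_irr] /andP [x'_codes x'_irr] xy.
have [_ sums_eq] := concat_code_inj j_range j_range x_irr x'_irr xy.
have jn : j <= n by case/andP: j_range.
congr pair; apply: code_rel_inj => i k ilt klt.
- case: (ltnP i k) => [ik|ki].
    by move: (sums_eq i k ik (leq_trans klt jn)); rewrite /rel_sum klt.
  by rewrite (code_rel_codes_upper x_codes ki) (code_rel_codes_upper x'_codes ki).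
- case: (ltnP i k) => [ik|ki]; last first.
    by rewrite (code_rel_codes_upper y_codes ki) (code_rel_codes_upper y'_codes ki).
  move: (sums_eq (i + j) (k + j)).
  rewrite /rel_sum [k + j < j]ltnNge !leq_addl /= !addnK ltn_add2r.
  by apply=> //; lia.
Qed.

Lemma concat_codes_disjoint n j j' A B c : 0 < j <= n -> 0 < j' <= n ->
  c \in concat_codes n j A B -> c \in concat_codes n j' A B -> j = j'.
Proof.
move=> j_range j'_range /imsetP [[x y] /setXP [+ _] ->] /imsetP [[x' y'] /setXP [+ _]].
rewrite !inE => /andP [_ x_irr] /andP [_ x'_irr] /= xy.
by have [] := concat_code_inj j_range j'_range x_irr x'_irr xy.
Qed.

Lemma sum_card_le (I : eqType) (T : finType) (r : seq I) (F : I -> {set T})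
    (U : {set T}) :
  uniq r -> {in r, forall i, F i \subset U} ->
  {in r &, forall i i' x, x \in F i -> x \in F i' -> i = i'} ->
  \sum_(i <- r) #|F i| <= #|U|.
Proof.
elim: r U => [|i r IH] U; first by rewrite big_nil.
move=> /= /andP [ir r_uniq] FU F_disj; rewrite big_cons.
have FiU : F i \subset U by apply: FU; apply: mem_head.
rewrite -(cardsID (F i) U) (setIidPr FiU) leq_add2l; apply: IH => // [i' i'r|].
  rewrite subsetD FU ?inE ?i'r ?orbT //=.
  apply/pred0P => x /=; apply/negbTE/andP => [[xi' xi]].
  have := F_disj i' i; rewrite !inE i'r eqxx orbT => /(_ isT isT x xi' xi) i'i.
  by rewrite -i'i i'r in ir.
by move=> i1 i2 i1r i2r; apply: F_disj; rewrite inE ?i1r ?i2r orbT.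
Qed.

Lemma codes_osum2_ge n A B :
  \sum_(1 <= j < n.+1) #|irr_codes j A| * #|codes (n - j) B| <= #|codes n (osum2 A B)|.
Proof.
have j_range j : j \in index_iota 1 n.+1 -> 0 < j <= n by rewrite mem_index_iota.
rewrite (eq_big_seq (fun j => #|concat_codes n j A B|)) => [|j /j_range j_r]; last first.
  by rewrite card_concat_codes.
apply: sum_card_le => [|j /j_range /andP [_ jn]|j j' /j_range + /j_range].
- exact: iota_uniq.
- exact: concat_codes_sub.
- by move=> j_range' j'_range' c; apply: concat_codes_disjoint.
Qed.

Lemma codes_osum2r n A B : codes n B \subset codes n (osum2 A B).
Proof.
apply/subsetP => _ /codesP [t [t_sorted t_bounded t_size ->]].
have -> : mkcode n (induced_rel B t) =
    mkcode n (induced_rel (osum2 A B) ([::] ++ map (addn (ord A)) t)).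
  apply: eq_mkcode => i k ilt klt; case: (ltnP i k) => [ik|ki].
    by rewrite induced_rel_osum2 ?t_size // /rel_sum /= !subn0.
  by rewrite /induced_rel ltnNge ki.
apply: mem_codes; rewrite ?size_map //.
  by rewrite -[map _ _]cat0s; apply: sorted_cat_shift.
by rewrite all_map; apply: sub_all t_bounded => z /=; rewrite ltn_add2l.
Qed.

Lemma oisoP G H : reflect
  (ord G = ord H /\ forall i j, i < j -> j < ord G -> adj G i j = adj H i j) (oiso G H).
Proof.
apply: (iffP andP) => [[/eqP GH /forallP adjGH]|[GH adjGH]]; split => //.
  move=> i j ij jG; have iG := ltn_trans ij jG.
  by apply/eqP; move/forallP: (adjGH (Ordinal iG)) => /(_ (Ordinal jG)) /implyP; apply.
by apply/eqP.
by apply/forallP => i; apply/forallP => j; apply/implyP => ij; rewrite adjGH.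
Qed.

Lemma codes_sub_same_adj n G H : ord G = ord H ->
  (forall i j, i < j -> j < ord G -> adj G i j = adj H i j) ->
  codes n G \subset codes n H.
Proof.
move=> GH adjGH; apply/subsetP => _ /codesP [s [s_sorted s_bounded s_size ->]].
have -> : mkcode n (induced_rel G s) = mkcode n (induced_rel H s).
  apply: eq_mkcode => i k ilt klt; rewrite /induced_rel; case: (ltnP i k) => //= ik.
  rewrite adjGH ?(sorted_ltn_nth ltn_trans) ?inE ?s_size //.
  by apply: (allP s_bounded); rewrite mem_nth // s_size.
by apply: (mem_codes s_sorted _ s_size); rewrite -GH.
Qed.

Lemma Sn_oiso n G H : oiso G H -> Sn n G = Sn n H.
Proof.
case/oisoP => GH adjGH; apply/eqP; rewrite !SnE eqn_leq !subset_leq_card //.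
  by apply: codes_sub_same_adj => // i j ij jH; rewrite adjGH // GH.
exact: codes_sub_same_adj.
Qed.

Lemma inJ_family A :
  [|| oiso A (J1 (ord A)), oiso A (J2 (ord A)), oiso A (J3 (ord A)),
      oiso A (J4 (ord A)) | oiso A (Lpath (ord A))] -> inJ A.
Proof. by move=> A_fam; apply/orP; left; apply/orP; left; apply/existsP; exists ord_max. Qed.

Section IrreducibleBlock.
Variable A : ograph.
Local Notation N := (ord A).
Local Notation E := (is_edge A).

Lemma is_edge_bounds a b : E a b -> a < b /\ b < N.
Proof. by case/and3P. Qed.

Lemma adj_edge a b : a < b -> b < N -> adj A a b = E a b.
Proof. by move=> ab bN; rewrite /is_edge ab bN. Qed.

Lemma irreducible_crossing : irreducible A -> crossing N E.
Proof.
move=> /existsPn A_irr u u_gt0 uN.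
have /existsPn /(_ (Ordinal uN)) := A_irr (Ordinal (leq_ltn_trans (leq_pred u) uN)).
rewrite /= ltn_predL u_gt0 /= => /forallPn [i /forallPn [k]].
rewrite negb_imply negb_or -!ltnNge => /and3P [eik uk iu].
by exists i, k; have [_ kN] := is_edge_bounds eik; split=> //; lia.
Qed.

Lemma mem_irr_codes n s : sorted ltn s -> all (gtn N) s -> size s = n ->
  crossing n (induced_rel A s) -> mkcode n (induced_rel A s) \in irr_codes n A.
Proof.
by move=> s_sorted s_bounded s_size s_cross; rewrite inE mem_codes ?irreducible_mkcode.
Qed.

Definition irreducible_triple a b c := (E a b || E a c) && (E a c || E b c).

Definition triple_pattern a b c := (E a b, E a c, E b c).

Lemma triple_irr_code a b c : a < b -> b < c -> c < N -> irreducible_triple a b c ->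
  mkcode 3 (induced_rel A [:: a; b; c]) \in irr_codes 3 A.
Proof.
move=> ab bc cN /andP [abc acb]; apply: mem_irr_codes => /=.
- by rewrite ab bc.
- by rewrite cN (ltn_trans bc cN) (ltn_trans ab (ltn_trans bc cN)).
- by [].
have [ac aN bN] : [/\ a < c, a < N & b < N] by split; lia.
move=> [//|[_ _|[_ _|//]]].
- case/orP: abc => [eab|eac]; [exists 0, 1 | exists 0, 2];
  by rewrite /induced_rel /= adj_edge.
- case/orP: acb => [eac|ebc]; [exists 0, 2 | exists 1, 2];
  by rewrite /induced_rel /= adj_edge.
Qed.

Lemma two_triple_patterns a b c a' b' c' :
  a < b -> b < c -> c < N -> irreducible_triple a b c ->
  a' < b' -> b' < c' -> c' < N -> irreducible_triple a' b' c' ->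
  triple_pattern a b c != triple_pattern a' b' c' -> 1 < #|irr_codes 3 A|.
Proof.
move=> ab bc cN abc ab' bc' cN' abc' pattern_neq; apply/card_gt1P.
exists (mkcode 3 (induced_rel A [:: a; b; c])).
exists (mkcode 3 (induced_rel A [:: a'; b'; c'])).
split; rewrite ?triple_irr_code //.
have [ac ac'] : a < c /\ a' < c' by split; lia.
have [aN bN aN' bN'] : [/\ a < N, b < N, a' < N & b' < N] by split; lia.
move: pattern_neq; rewrite /triple_pattern !xpair_eqE !negb_and => /orP [/orP [] |] ne.
- by apply: (@mkcode_neq _ _ _ 0 1); rewrite // /induced_rel /= !adj_edge.
- by apply: (@mkcode_neq _ _ _ 0 2); rewrite // /induced_rel /= !adj_edge.
- by apply: (@mkcode_neq _ _ _ 1 2); rewrite // /induced_rel /= !adj_edge.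
Qed.

Lemma span_quad_irr_code a b c d : a < b -> b < c -> c < d -> d < N -> E a d ->
  mkcode 4 (induced_rel A [:: a; b; c; d]) \in irr_codes 4 A.
Proof.
move=> ab bc cd dN ead; apply: mem_irr_codes => //=; first by rewrite ab bc cd.
  by rewrite dN andbT; apply/and3P; split; lia.
have ad : a < d by lia.
by move=> u u_gt0 u4; exists 0, 3; rewrite /induced_rel /= adj_edge //; split=> //; lia.
Qed.

Lemma cross_quad_irr_code a b c d : a < b -> b < c -> c < d -> d < N ->
  E a c -> E b d -> mkcode 4 (induced_rel A [:: a; b; c; d]) \in irr_codes 4 A.
Proof.
move=> ab bc cd dN eac ebd; apply: mem_irr_codes => //=; first by rewrite ab bc cd.
  by rewrite dN andbT; apply/and3P; split; lia.
have [ac bd cN] : [/\ a < c, b < d & c < N] by split; lia.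
move=> [//|[_ _|[_ _|[_ _|//]]]]; rewrite /induced_rel /=.
- by exists 0, 2; rewrite /= adj_edge.
- by exists 0, 2; rewrite /= adj_edge.
- by exists 1, 3; rewrite /= adj_edge.
Qed.

Hypothesis A_cross : crossing N E.

Lemma exists_irreducible_triple : 2 < N ->
  exists a b c, [/\ a < b, b < c, c < N & irreducible_triple a b c].
Proof.
move=> N3; have [i [j [i1 j1 _ eij]]] := @A_cross 1 isT (ltnW N3).
have i0 : i = 0 by lia.
subst i; have [_ jN] := is_edge_bounds eij.
case: (ltnP 1 j) => j1'; first by exists 0, 1, j; rewrite /irreducible_triple eij !orbT.
have j_eq1 : j = 1 by lia.
subst j.
have [i [k [i2 k2 kN eik]]] := @A_cross 2 isT N3.
exists 0, 1, k; split=> //; rewrite /irreducible_triple.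
case: (posnP i) => [i0|i_gt0]; first by rewrite -i0 eik !orbT.
have i_eq1 : i = 1 by lia.
by rewrite i_eq1 in eik; rewrite eij eik !orbT.
Qed.

Lemma small_inJ : N <= 2 -> inJ A.
Proof.
move=> N2; apply: inJ_family; apply/orP; left; apply/oisoP; split=> // i k ik kN /=.
have [i0 k1] : i = 0 /\ k = 1 by lia.
subst i k; have [i' [k' [i1 k1 kN' eik]]] := @A_cross 1 isT kN.
have [ik' _] := is_edge_bounds eik.
have [i'0 k'1] : i' = 0 /\ k' = 1 by lia.
by subst i' k'; rewrite adj_edge.
Qed.

Section UniformTriples.
Variables p1 p2 p3 : bool.
Hypothesis uniform : forall a b c, a < b -> b < c -> c < N ->
  irreducible_triple a b c -> triple_pattern a b c = (p1, p2, p3).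

Lemma uniform_span a b c : a < b -> b < c -> E a c -> triple_pattern a b c = (p1, p2, p3).
Proof.
move=> ab bc eac; have [_ cN] := is_edge_bounds eac.
by apply: uniform; rewrite // /irreducible_triple eac !orbT.
Qed.

Lemma uniform_path a b c : a < b -> b < c -> E a b -> E b c ->
  triple_pattern a b c = (p1, p2, p3).
Proof.
move=> ab bc eab ebc; have [_ cN] := is_edge_bounds ebc.
by apply: uniform; rewrite // /irreducible_triple eab ebc !orbT.
Qed.

Lemma uniform_complete : p1 -> p2 -> p3 -> oiso A (J1 N).
Proof.
move=> h1 h2 h3.
suff edge_all k : k < N -> forall x, x < k -> E x k.
  by apply/oisoP; split=> // i k ik kN; rewrite adj_edge // edge_all.
elim/ltn_ind: k => k IH kN x xk.
have [i [j [ik kj jN eij]]] := @A_cross k (leq_ltn_trans (leq0n x) xk) kN.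
have eik : E i k.
  case: (ltngtP k j) kj => [kj _|//|-> //].
  by case: (uniform_span ik kj eij) => ->.
case: (ltngtP x i) => [xi|ix|-> //].
- by case: (uniform_path xi ik (IH i ik (ltn_trans ik kN) x xi) eik) => _ ->.
- by case: (uniform_span ix xk eik) => _ _ ->.
Qed.

Lemma uniform_star_first : p1 -> ~~ p3 -> oiso A (J3 N).
Proof.
move=> h1 h3.
have no_path a b c : a < b -> b < c -> E a b -> ~~ E b c.
  move=> ab bc eab; apply/negP => ebc; move: h3.
  by case: (uniform_path ab bc eab ebc) => _ _ <-; rewrite ebc.
have edge0 k : 0 < k -> k < N -> E 0 k.
  elim/ltn_ind: k => k IH k_gt0 kN.
  have [i [j [ik kj jN eij]]] := @A_cross k k_gt0 kN.
  case: (posnP i) => [i0|i_gt0].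
    subst i; case: (ltngtP k j) kj => [kj _|//|-> //].
    by case: (uniform_span k_gt0 kj eij) => ->.
  have e0i := IH i ik i_gt0 (ltn_trans ik kN).
  by move: (no_path 0 i j i_gt0 (leq_trans ik kj) e0i); rewrite eij.
apply/oisoP; split=> // i k ik kN /=; rewrite adj_edge //.
case: (posnP i) => [i0|i_gt0]; first by subst i; apply: edge0.
exact/negbTE/no_path/(edge0 i i_gt0 (ltn_trans ik kN)).
Qed.

Lemma uniform_path_graph : ~~ p2 -> oiso A (Lpath N).
Proof.
move=> h2.
have no_span a b c : a < b -> b < c -> ~~ E a c.
  move=> ab bc; apply/negP => eac; move: h2.
  by case: (uniform_span ab bc eac) => _ <- _; rewrite eac.
apply/oisoP; split=> // i k ik kN /=; rewrite adj_edge //.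
case: eqP => [k_eq|k_neq]; last by apply/negbTE/(no_span i i.+1 k); lia.
have [a [b [ak kb bN eab]]] := @A_cross k (leq_ltn_trans (leq0n i) ik) kN.
have [ab _] := is_edge_bounds eab.
case: (ltnP a.+1 b) => [ab1|ba1].
  by move: (no_span a a.+1 b (ltnSn a) ab1); rewrite eab.
have [-> ->] : i = a /\ k = b by lia.
exact: eab.
Qed.

Lemma uniform_star_last : ~~ p1 -> p3 -> oiso A (J4 N).
Proof.
move=> h1 h3.
have no_path a b c : a < b -> b < c -> E b c -> ~~ E a b.
  move=> ab bc ebc; apply/negP => eab; move: h1.
  by case: (uniform_path ab bc eab ebc) => <-; rewrite eab.
have edgeN d i : N.-1 - i <= d -> i < N.-1 -> E i N.-1.
  elim: d i => [|d IH] i id iN; first by lia.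
  have [a [b [ai ib bN eab]]] := @A_cross i.+1 isT ltac:(lia).
  have [ab _] := is_edge_bounds eab.
  have [bN1|bN1] : b < N.-1 \/ b = N.-1 by lia.
    by move: (no_path a b N.-1 ab bN1 (IH b ltac:(lia) bN1)); rewrite eab.
  rewrite bN1 in eab; rewrite ltnS in ai.
  case: (ltngtP a i) ai => [ai' _|//|<- //].
  by case: (uniform_span ai' iN eab) => _ _ ->.
apply/oisoP; split=> // i k ik kN /=; rewrite adj_edge //.
case: eqP => [->|k_neq]; first by apply: (edgeN N); lia.
by apply/negbTE/(no_path i k N.-1 ik); [lia | apply: (edgeN N); lia].
Qed.

Section Matching.
Hypotheses (h1 : ~~ p1) (h3 : ~~ p3).

Lemma no_path a b c : a < b -> b < c -> E a b -> E b c -> False.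
Proof.
by move=> ab bc eab ebc; move: h1; case: (uniform_path ab bc eab ebc) => <-; rewrite eab.
Qed.

Lemma no_fork_right a b c : a < b -> b < c -> E a b -> E a c -> False.
Proof.
by move=> ab bc eab eac; move: h1; case: (uniform_span ab bc eac) => <-; rewrite eab.
Qed.

Lemma no_fork_left a b c : a < b -> b < c -> E a c -> E b c -> False.
Proof.
by move=> ab bc eac ebc; move: h3; case: (uniform_span ab bc eac) => _ _ <-; rewrite ebc.
Qed.

Lemma edges_touching a b i k : E a b -> E i k ->
  [|| i == a, i == b, k == a | k == b] -> (i, k) = (a, b).
Proof.
move=> eab eik; have [ab _] := is_edge_bounds eab; have [ik _] := is_edge_bounds eik.
case/or4P => /eqP ?; subst.
- by case: (ltngtP k b) => [kb|bk|-> //]; exfalso;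
    [apply: (no_fork_right ik kb) | apply: (no_fork_right ab bk)].
- by exfalso; apply: (no_path ab ik).
- by exfalso; apply: (no_path ik ab).
- by case: (ltngtP i a) => [ia|ai|-> //]; exfalso;
    [apply: (no_fork_left ia ab) | apply: (no_fork_left ai ik)].
Qed.

Lemma two_edge_pattern a b c d : N = 4 -> E a b -> E c d ->
  (forall v, v < 4 -> v \in [:: a; b; c; d]) ->
  forall i k, i < k -> k < 4 -> adj A i k = ((i, k) == (a, b)) || ((i, k) == (c, d)).
Proof.
move=> N4 eab ecd cover i k ik k4; rewrite adj_edge ?N4 //.
apply/idP/idP => [eik|]; last by case/orP => /eqP [-> ->].
have := cover i (ltn_trans ik k4); rewrite !inE => /or4P [] /eqP i_eq.
- by rewrite (edges_touching eab eik) ?i_eq ?eqxx.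
- by rewrite (edges_touching eab eik) ?i_eq ?eqxx ?orbT.
- by rewrite (edges_touching ecd eik) ?i_eq ?eqxx ?orbT.
- by rewrite (edges_touching ecd eik) ?i_eq ?eqxx ?orbT.
Qed.

Lemma matching_star : E 0 N.-1 ->
  ~ (exists a b, [/\ 0 < a, b < N.-1 & E a b]) -> oiso A (J2 N).
Proof.
move=> e0N no_inner; apply/oisoP; split=> // i k ik kN /=; rewrite adj_edge //.
apply/idP/idP => [eik|]; last by case/andP => /eqP -> /eqP ->.
case: (posnP i) => [i0|i_gt0] /=.
  have [_ ->] : (i, k) = (0, N.-1) by apply: (edges_touching e0N eik); rewrite i0 eqxx.
  by rewrite eqxx.
case: (eqVneq k N.-1) => [kN1|kN1].
  have [i0 _] : (i, k) = (0, N.-1).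
    by apply: (edges_touching e0N eik); rewrite kN1 eqxx !orbT.
  by rewrite i0 in i_gt0.
by case: no_inner; exists i, k; split=> //; lia.
Qed.

Lemma matching_star_inner a b : 4 < N -> E 0 N.-1 -> 0 < a -> b < N.-1 -> E a b ->
  1 < #|irr_codes 4 A|.
Proof.
move=> N5 e0N a_gt0 bN1 eab; have [ab _] := is_edge_bounds eab.
have [c [c1 cN1 n1c]] : exists c, [/\ 1 < c, c < N.-1 & ~~ E 1 c].
  case: (boolP (E 1 2)) => e12; last by exists 2; split=> //; lia.
  exists 3; split=> //; first by lia.
  by apply/negP => e13; case: (edges_touching e12 e13 isT).
apply/card_gt1P; exists (mkcode 4 (induced_rel A [:: 0; a; b; N.-1])).
exists (mkcode 4 (induced_rel A [:: 0; 1; c; N.-1])).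
have N1N : N.-1 < N by lia.
split; [exact: span_quad_irr_code | exact: span_quad_irr_code |].
by apply: (@mkcode_neq _ _ _ 1 2); rewrite // /induced_rel /= !adj_edge //; lia.
Qed.

Lemma matching_cross : 4 < N -> E 0 2 -> E 1 3 -> False.
Proof.
move=> N5 e02 e13; have [i [j [i4 j4 _ eij]]] := @A_cross 4 isT N5.
have : (i, j) = (0, 2) \/ (i, j) = (1, 3).
  case: i i4 {j4} eij => [|[|[|[|//]]]] _ eij;
  by [left; apply: (edges_touching e02 eij) | right; apply: (edges_touching e13 eij)].
by case=> [] [_ j_eq]; rewrite j_eq in j4.
Qed.

Lemma matching_no_span : 2 < N -> ~~ E 0 N.-1 -> oiso A Q1 \/ 1 < #|irr_codes 4 A|.
Proof.
move=> N3 n0N.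
have [i [p [i1 _ pN e0p]]] := @A_cross 1 isT (ltnW N3).
have i0 : i = 0 by lia.
subst i; have [p_gt0 _] := is_edge_bounds e0p.
have pN1 : p < N.-1.
  by case: (ltngtP p N.-1) => // [|p_eq]; [lia | rewrite -p_eq e0p in n0N].
have [a [b [ap pb bN eab]]] := @A_cross p.+1 isT ltac:(lia).
have [ab _] := is_edge_bounds eab.
have [a_gt0 ap'] : 0 < a /\ a < p.
  have [ap'|a_eq] : a < p \/ a = p by lia.
    split=> //; case: (posnP a) => // a0.
    have [_ b_eq] : (a, b) = (0, p) by apply: (edges_touching e0p eab); rewrite a0 eqxx.
    by rewrite b_eq ltnn in pb.
  have [a0 _] : (a, b) = (0, p).
    by apply: (edges_touching e0p eab); rewrite a_eq eqxx !orbT.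
  by rewrite -a_eq a0 in p_gt0.
case: (ltnP 4 N) => [N5|N4]; last first.
  have [N_eq a_eq p_eq b_eq] : [/\ N = 4, a = 1, p = 2 & b = 3] by split; lia.
  subst a p b; left; apply/oisoP; split=> // i k ik; rewrite N_eq => k4.
  by rewrite (two_edge_pattern N_eq e0p eab) // => v; case: v => [|[|[|[|]]]].
right.
have n0b : ~~ E 0 b.
  apply/negP => e0b; have [b_eq] : (0, b) = (0, p) by apply: (edges_touching e0p e0b).
  by rewrite b_eq ltnn in pb.
have [c [d [f [g [cd df fg gN ecg]]]]] :
    exists c d f g, [/\ c < d, d < f, f < g, g < N & E c g].
  case: (ltnP 1 a) => a_le1; first by exists 0, 1, a, p.
  case: (ltnP 2 p) => p_le2; first by exists 0, 1, 2, p.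
  have [a_eq p_eq] : a = 1 /\ p = 2 by lia.
  subst a p; case: (ltnP 3 b) => b_le3; first by exists 1, 2, 3, b.
  have b_eq : b = 3 by lia.
  by subst b; case: (matching_cross N5 e0p eab).
apply/card_gt1P; exists (mkcode 4 (induced_rel A [:: 0; a; p; b])).
exists (mkcode 4 (induced_rel A [:: c; d; f; g])).
split; [exact: cross_quad_irr_code | exact: span_quad_irr_code |].
have cg : c < g by lia.
apply: (@mkcode_neq _ _ _ 0 3); rewrite // /induced_rel /= !adj_edge //; last by lia.
by rewrite ecg (negbTE n0b).
Qed.

Lemma uniform_matching : 2 < N -> inJ A \/ 1 < #|irr_codes 4 A|.
Proof.
move=> N3; case: (boolP (E 0 N.-1)) => [e0N|n0N]; last first.
  by case: (matching_no_span N3 n0N) => [Q|]; [left; rewrite /inJ Q !orbT | right].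
case: (classic (exists a b, [/\ 0 < a, b < N.-1 & E a b])) => [|no_inner]; last first.
  by left; apply: inJ_family; rewrite matching_star ?orbT.
move=> [a [b [a_gt0 bN1 eab]]]; have [ab _] := is_edge_bounds eab.
case: (ltnP 4 N) => [N5|N4].
  by right; apply: (matching_star_inner N5 e0N a_gt0 bN1 eab).
have [N_eq a_eq b_eq] : [/\ N = 4, a = 1 & b = 2] by split; lia.
subst a b; rewrite N_eq in e0N; left; rewrite /inJ; apply/orP; right; apply/oisoP.
split=> // i k ik; rewrite N_eq => k4.
by rewrite (two_edge_pattern N_eq e0N eab) // => v; case: v => [|[|[|[|]]]].
Qed.

End Matching.

End UniformTriples.

Lemma irr_codes_not_inJ : ~~ inJ A ->
  [/\ 0 < #|irr_codes 1 A|, 0 < #|irr_codes 2 A| &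
      1 < #|irr_codes 3 A| \/ 0 < #|irr_codes 3 A| /\ 1 < #|irr_codes 4 A|].
Proof.
move=> notJ; have N3 : 2 < N by rewrite ltnNge; apply: contra notJ; apply: small_inJ.
split.
- apply/card_gt0P; exists (mkcode 1 (induced_rel A [:: 0])).
  by apply: mem_irr_codes => //= [|u u_gt0 u1]; [rewrite andbT; lia | lia].
- have [i [k [i1 _ kN e0k]]] := @A_cross 1 isT (ltnW N3).
  have i0 : i = 0 by lia.
  subst i; have [k_gt0 _] := is_edge_bounds e0k.
  apply/card_gt0P; exists (mkcode 2 (induced_rel A [:: 0; k])).
  apply: mem_irr_codes => //=; rewrite ?k_gt0 ?kN ?andbT //; first by lia.
  by move=> u u_gt0 u2; exists 0, 1; rewrite /induced_rel /= adj_edge //; split=> //; lia.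
have [a0 [b0 [c0 [ab0 bc0 cN0 t0]]]] := exists_irreducible_triple N3.
have irr3 : 0 < #|irr_codes 3 A|.
  apply/card_gt0P; exists (mkcode 3 (induced_rel A [:: a0; b0; c0])).
  exact: triple_irr_code.
case: (classic (exists a b c, [/\ a < b, b < c, c < N, irreducible_triple a b c &
    triple_pattern a b c != triple_pattern a0 b0 c0])) => [|same].
  move=> [a [b [c [ab bc cN t tne]]]]; left.
  exact: (two_triple_patterns ab bc cN t ab0 bc0 cN0 t0 tne).
have uniform a b c : a < b -> b < c -> c < N -> irreducible_triple a b c ->
    triple_pattern a b c = triple_pattern a0 b0 c0.
  move=> ab bc cN t; apply/eqP/negPn/negP => tne; apply: same; by exists a, b, c.
case pattern0 : (triple_pattern a0 b0 c0) uniform => [[q1 q2] q3] uniform.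
move: pattern0 t0; rewrite /triple_pattern /irreducible_triple => [[-> -> ->]].
case: q1 q2 q3 uniform => [] [] [] uniform // _.
- by case/negP: notJ; apply: inJ_family; rewrite (uniform_complete uniform).
- by case/negP: notJ; apply: inJ_family; rewrite (uniform_star_first uniform) ?orbT.
- by case/negP: notJ; apply: inJ_family; rewrite (uniform_path_graph uniform) ?orbT.
- by case/negP: notJ; apply: inJ_family; rewrite (uniform_star_last uniform) ?orbT.
- by case: (uniform_matching uniform isT isT N3) => [/(negP notJ)|]; last by right.
Qed.

End IrreducibleBlock.

Lemma pow2_sum_bound n (c a : nat -> nat) :
  0 < c 1 -> 0 < c 2 -> 1 < c 3 \/ 0 < c 3 /\ 1 < c 4 ->
  (forall m, m < n -> 2 ^ m.-1 <= a m) ->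
  0 < n -> 2 ^ n.-1 <= \sum_(1 <= j < n.+1) c j * a (n - j).
Proof.
move=> c1 c2 c34 a_ge.
have c3 : 0 < c 3 by case: c34 => [/ltnW|[]].
have term j m : 0 < c j -> m < n -> 2 ^ m.-1 <= c j * a m.
  by move=> cj mn; rewrite -[2 ^ _]mul1n; apply: leq_mul; last exact: a_ge.
rewrite /index_iota subSS subn0.
case: n a_ge term => [//|[|[|[|m]]]] a_ge term _ /=.
all: rewrite !big_cons ?big_nil !subSS ?subn0.
- by rewrite addn0; exact: term 1 0 c1 isT.
- by have := term 1 1 c1 isT; have := term 2 0 c2 isT; rewrite /= expn1; lia.
- have := term 1 2 c1 isT; have := term 2 1 c2 isT; have := term 3 0 c3 isT.
  by rewrite /=; lia.
have := term 1 m.+3 c1 (ltnSn _); have := term 2 m.+2 c2 ltac:(lia); rewrite /= !expnS.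
case: c34 => [c3_gt1|[_ c4_gt1]].
  by have := leq_mul c3_gt1 (a_ge m.+1 ltac:(lia)) => /=; lia.
have := term 3 m.+1 c3 ltac:(lia); have := leq_mul c4_gt1 (a_ge m ltac:(lia)).
have : 2 ^ m <= 2 * 2 ^ m.-1 by case: m {a_ge term} => //= m; rewrite expnS.
by move=> /=; lia.
Qed.

Lemma Sn_osum_ge bs : all irreducible bs -> forall n, 0 < n ->
  n <= count (fun B => ~~ inJ B) bs -> 2 ^ n.-1 <= Sn n (osum bs).
Proof.
elim: bs => [|B bs IH] /=; first by move=> _ n n_gt0 /(leq_trans n_gt0).
move=> /andP [B_irr /IH Sn_ge] n n_gt0.
case: (boolP (inJ B)) => [BJ|notJ] /= n_le.
  rewrite add0n in n_le; apply: leq_trans (Sn_ge n n_gt0 n_le) _.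
  by rewrite !SnE subset_leq_card ?codes_osum2r.
have [c1 c2 c34] := irr_codes_not_inJ (irreducible_crossing B_irr) notJ.
rewrite SnE; apply: leq_trans (codes_osum2_ge n B (osum bs)).
apply: (pow2_sum_bound (c := fun j => #|irr_codes j B|)
  (a := fun m => #|codes m (osum bs)|)) => // m mn.
case: (posnP m) => [->|m_gt0]; first exact: codes0_gt0.
by rewrite -SnE; apply: Sn_ge; lia.
Qed.

Theorem lemma19 (k : nat) (G : ograph) (bs : seq ograph) :
  block_decomposition G bs ->
  k <= count (fun B => ~~ inJ B) bs ->
  forall n : nat, 0 < n -> n <= k -> 2 ^ n.-1 <= Sn n G.
Proof.
case/andP => bs_irr G_bs k_le n n_gt0 n_le; rewrite (Sn_oiso n G_bs).
exact: Sn_osum_ge bs_irr n n_gt0 (leq_trans n_le k_le).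
Qed.
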